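(* Let $n$ be a positive even integer and let $$R=H^{\otimes n}\left(\sum_{x\in\{0,1\}^n}(-1)^{\sum_{i=1}^{n-1}x_ix_{i+1}}|x\rangle\langle x|\right)H^{\otimes n},$$ a $2^n\times 2^n$ real matrix indexed by $\{0,1\}^n$. Then every matrix element of $R$ satisfies $|\langle y|R|z\rangle|=2^{-n/2}$ for all $y,z\in\{0,1\}^n$, and in every row of $R$ there are exactly $\frac12(2^n+2^{n/2})$ positive entries and $\frac12(2^n-2^{n/2})$ negative entries.
   Context: $H=\frac{1}{\sqrt2}\begin{pmatrix}1&1\\1&-1\end{pmatrix}$ is the Hadamard matrix, $H^{\otimes n}$ its $n$-fold tensor power, and $\{|x\rangle : x\in\{0,1\}^n\}$ is the computational basis of $(\mathbb{C}^2)^{\otimes n}$, with $x=x_1x_2\ldots x_n$. *)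

From mathcomp Require Import all_boot all_order all_algebra.
Set Implicit Arguments. Unset Strict Implicit. Unset Printing Implicit Defensive.
Import Order.TTheory GRing.Theory Num.Theory.
Local Open Scope ring_scope.

(* Computational basis of (C^2)^{\otimes n}: bit strings x = x_1 ... x_n,
   represented as n.-tuples of booleans; x_{i+1} (1-indexed) is nth false x i. *)

Definition bit2ord (b : bool) : 'I_2 := inord (nat_of_bool b).

Definition hadamard (R : rcfType) : 'M[R]_2 :=
  (Num.sqrt 2)^-1 *: \matrix_(i < 2, j < 2) (-1) ^+ (i * j)%N.

Definition hadamard_n (R : rcfType) (n : nat) (y x : n.-tuple bool) : R :=
  \prod_(i < n) hadamard R (bit2ord (nth false y i)) (bit2ord (nth false x i)).

Definition phase (R : rcfType) (n : nat) (x : n.-tuple bool) : R :=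
  (-1) ^+ (\sum_(i < n.-1) (nth false x i && nth false x i.+1 : nat))%N.

Definition Rmat (R : rcfType) (n : nat) (y z : n.-tuple bool) : R :=
  \sum_(x : n.-tuple bool) hadamard_n R y x * phase R x * hadamard_n R x z.

From mathcomp Require Import all_boot all_order all_algebra.
From mathcomp Require Import ring zify.
Set Implicit Arguments. Unset Strict Implicit. Unset Printing Implicit Defensive.
Import Order.TTheory GRing.Theory Num.Theory.
Local Open Scope ring_scope.

(* Since <y|H^{(x)n}|x> = 2^{-n/2} (-1)^{y.x}, the entry <y|R|z> equals 2^{-n} S(y + z)
   where S(a) = sum_x (-1)^{a.x + q(x)} and q(x) = sum_i x_i x_{i+1} over GF(2).
   Summing out the first two bits of x gives S(a_0 a_1 a') = +-2 S(a'') with a'' of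
   length n - 2, so |S| = 2^{n/2} for even n: every entry has modulus 2^{-n/2}.
   The entries of a row sum to 1, because sum_z (-1)^{z.x} vanishes unless x = 0;
   hence #positive - #negative = 2^{n/2}, while #positive + #negative = 2^n. *)

Fixpoint bitseqs (n : nat) : seq (seq bool) :=
  if n is m.+1 then [seq true :: s | s <- bitseqs m] ++ [seq false :: s | s <- bitseqs m]
  else [:: [::]].

Lemma cons_inj (T : Type) (b : T) : injective (cons b).
Proof. by move=> s t []. Qed.

Lemma mem_bitseqs n s : (s \in bitseqs n) = (size s == n).
Proof.
elim: n s => [|n IHn] [|b s] //=; rewrite mem_cat.
  by apply/negbTE/norP; split; apply/mapP => -[].
have notin_map c : (c :: s \in [seq ~~ c :: t | t <- bitseqs n]) = false.
  by apply/negbTE/mapP => -[t _ []]; case: c.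
by rewrite eqSS -IHn; case: b; rewrite ?notin_map ?mem_map ?orbF //; apply: cons_inj.
Qed.

Lemma uniq_bitseqs n : uniq (bitseqs n).
Proof.
elim: n => [|n IHn] //=; rewrite cat_uniq !map_inj_uniq ?IHn //=; try exact: cons_inj.
rewrite andbT; apply/hasPn => _ /mapP[t _ ->]; by apply/mapP => -[].
Qed.

Lemma big_bitseqsS (T : Type) (idx : T) (op : Monoid.com_law idx) n (F : seq bool -> T) :
  \big[op/idx]_(s <- bitseqs n.+1) F s =
  op (\big[op/idx]_(s <- bitseqs n) F (true :: s)) (\big[op/idx]_(s <- bitseqs n) F (false :: s)).
Proof. by rewrite /= big_cat !big_map. Qed.

Lemma perm_tuple_bitseqs n : perm_eq [seq val t | t : n.-tuple bool] (bitseqs n).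
Proof.
apply: uniq_perm => [||s]; rewrite ?uniq_bitseqs //.
  by rewrite map_inj_uniq ?enum_uniq //; apply: val_inj.
rewrite mem_bitseqs; apply/mapP/eqP => [[t _ ->]|s_n]; first exact: size_tuple.
by exists (Tuple (introT eqP s_n)); rewrite ?mem_enum.
Qed.

Lemma big_tuple_bitseqs (T : Type) (idx : T) (op : Monoid.com_law idx) n (F : seq bool -> T) :
  \big[op/idx]_(t : n.-tuple bool) F t = \big[op/idx]_(s <- bitseqs n) F s.
Proof. by rewrite -(perm_big _ (perm_tuple_bitseqs n)) big_map big_enum. Qed.

Fixpoint dotb (a x : seq bool) : bool :=
  if (a, x) is (a0 :: a', x0 :: x') then (a0 && x0) (+) dotb a' x' else false.

Fixpoint xorbs (y z : seq bool) : seq bool :=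
  if (y, z) is (y0 :: y', z0 :: z') then (y0 (+) z0) :: xorbs y' z' else [::].

Fixpoint pathq (x : seq bool) : bool :=
  if x is x0 :: ((x1 :: _) as x') then (x0 && x1) (+) pathq x' else false.

Definition flip_head (c : bool) (s : seq bool) : seq bool :=
  if s is b :: s' then (b (+) c) :: s' else [::].

Lemma dotbC a x : dotb a x = dotb x a.
Proof. by elim: a x => [|a0 a IHa] [|x0 x] //=; rewrite IHa andbC. Qed.

Lemma dotb0 a n : dotb a (nseq n false) = false.
Proof. by elim: a n => [|a0 a IHa] [|n] //=; rewrite IHa andbF. Qed.

Lemma size_xorbs y z : size y = size z -> size (xorbs y z) = size y.
Proof. by elim: y z => [|y0 y IHy] [|z0 z] //= [/IHy ->]. Qed.

Lemma dotb_xorbs y z x : size y = size z -> dotb (xorbs y z) x = dotb y x (+) dotb z x.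
Proof.
elim: y z x => [|y0 y IHy] [|z0 z] [|x0 x] //= [/IHy ->].
by case: y0; case: z0; case: x0; case: (dotb y x); case: (dotb z x).
Qed.

Lemma pathq_cons a x : pathq (a :: x) = (a && head false x) (+) pathq x.
Proof. by case: x => [|b x] //=; rewrite andbF. Qed.

Lemma pathq0 n : pathq (nseq n false) = false.
Proof. by elim: n => [|n IHn] //; rewrite [nseq _ _]/= pathq_cons IHn. Qed.

Lemma size_flip_head c s : size (flip_head c s) = size s.
Proof. by case: s. Qed.

Lemma dotb_flip_head c a x : size a = size x ->
  dotb (flip_head c a) x = (c && head false x) (+) dotb a x.
Proof.
case: a x => [|a0 a] [|x0 x] //=; first by case: c.
by case: a0; case: c; case: x0; case: (dotb a x).
Qed.

Section SignSums.

Variable R : comNzRingType.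

Lemma sum_sign_dotb n x : size x = n ->
  \sum_(z <- bitseqs n) (-1) ^+ dotb z x = (if x == nseq n false then 2 ^+ n else 0) :> R.
Proof.
elim: n x => [|n IHn] [|x0 x] //=; first by rewrite big_seq1.
move=> [x_n]; rewrite big_bitseqsS -big_split /=.
have -> : \sum_(z <- bitseqs n) ((-1) ^+ (x0 (+) dotb z x) + (-1) ^+ dotb z x)
    = (1 + (-1) ^+ x0) * \sum_(z <- bitseqs n) (-1) ^+ dotb z x :> R.
  by rewrite mulr_sumr; apply: eq_bigr => z _; rewrite signr_addb; ring.
rewrite IHn // eqseq_cons; case: x0; first by rewrite addrN mul0r.
by case: (x == _); rewrite ?mulr0 // exprS; ring.
Qed.

Definition qsum (a : seq bool) : R :=
  \sum_(x <- bitseqs (size a)) (-1) ^+ (dotb a x (+) pathq x).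

(* Summing over x_0 gives 2 [x_1 = a_0]; substituting x_1 = a_0 flips the head of a. *)
Lemma qsum_cons2 a0 a1 a :
  qsum [:: a0, a1 & a] = 2 * (-1) ^+ (a1 && a0) * qsum (flip_head a0 a).
Proof.
rewrite /qsum size_flip_head [size _]/= !big_bitseqsS -!big_split mulr_sumr.
apply: eq_big_seq => x; rewrite mem_bitseqs => /eqP x_a.
rewrite !pathq_cons /= dotb_flip_head ?x_a //.
move: (dotb a x) (pathq x) (head false x) => d q h.
by case: a0; case: a1; case: d; case: q; case: h; rewrite /= ?expr0 ?expr1; ring.
Qed.

Lemma qsum_even k a : size a = (k + k)%N -> exists e : bool, qsum a = (-1) ^+ e * 2 ^+ k.
Proof.
elim: k a => [|k IHk] [|a0 [|a1 a]] //=; rewrite ?addnS ?addSn //.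
  by move=> _; exists false; rewrite /qsum big_seq1 expr0 mul1r.
move=> [a_k]; rewrite qsum_cons2; have [e ->] := IHk _ (etrans (size_flip_head a0 a) a_k).
by exists ((a1 && a0) (+) e); rewrite signr_addb exprS; ring.
Qed.

Lemma qsum_xorbs n y z : size y = n -> size z = n ->
  qsum (xorbs y z) = \sum_(x <- bitseqs n) (-1) ^+ (dotb y x (+) dotb z x (+) pathq x).
Proof.
move=> y_n z_n; have y_z : size y = size z by rewrite y_n z_n.
by rewrite /qsum size_xorbs // y_n; under eq_bigr do rewrite dotb_xorbs //.
Qed.

Lemma sum_qsum_xorbs n y : size y = n -> \sum_(z <- bitseqs n) qsum (xorbs y z) = 2 ^+ n.
Proof.
move=> y_n; transitivity (\sum_(z <- bitseqs n) \sum_(x <- bitseqs n)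
    (-1) ^+ (dotb y x (+) dotb z x (+) pathq x) : R).
  by apply: eq_big_seq => z; rewrite mem_bitseqs => /eqP; apply: qsum_xorbs.
rewrite exchange_big /=; transitivity (\sum_(x <- bitseqs n)
    (-1) ^+ (dotb y x (+) pathq x) * (if x == nseq n false then 2 ^+ n else 0) : R).
  apply: eq_big_seq => x; rewrite mem_bitseqs => /eqP x_n.
  rewrite -(sum_sign_dotb x_n) mulr_sumr; apply: eq_bigr => z _.
  by rewrite -signr_addb addbAC.
rewrite (bigD1_seq (nseq n false)) ?uniq_bitseqs ?mem_bitseqs ?size_nseq //= eqxx.
by rewrite big1 => [|x /negbTE ->]; rewrite ?dotb0 ?pathq0 ?mulr0 ?mul1r ?addr0.
Qed.

End SignSums.

Section HadamardConjugate.

Variable R : rcfType.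

Lemma hadamard_bit (u v : bool) :
  hadamard R (bit2ord u) (bit2ord v) = (Num.sqrt 2)^-1 * (-1) ^+ (u && v).
Proof. by rewrite /hadamard !mxE /bit2ord !inordK ?ltnS ?leq_b1 //; case: u; case: v. Qed.

Lemma prod_hadamard_bits n (y x : seq bool) : size y = n -> size x = n ->
  \prod_(i < n) hadamard R (bit2ord (nth false y i)) (bit2ord (nth false x i))
  = (Num.sqrt 2)^-1 ^+ n * (-1) ^+ dotb y x.
Proof.
elim: n y x => [|n IHn] [|y0 y] [|x0 x] //=; first by rewrite big_ord0 mulr1.
move=> [y_n] [x_n]; rewrite big_ord_recl /= IHn // hadamard_bit signr_addb exprS; ring.
Qed.

Lemma phase_pathq n (x : n.-tuple bool) : phase R x = (-1) ^+ pathq x.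
Proof.
rewrite /phase; case: x => s /= /eqP <-; elim: s => [|a [|b s] IHs]; rewrite ?big_ord0 //.
rewrite pathq_cons signr_addb -IHs [(size _).-1]/= big_ord_recl exprD /=.
by congr (_ * (-1) ^+ _); apply: eq_bigr => i _; rewrite lift0.
Qed.

Lemma Rmat_qsum n (y z : n.-tuple bool) : Rmat R y z = (2 ^+ n)^-1 * qsum R (xorbs y z).
Proof.
have sqrt2_invX : (Num.sqrt 2)^-1 ^+ n * (Num.sqrt 2)^-1 ^+ n = (2 ^+ n)^-1 :> R.
  by rewrite -exprMn -invfM -expr2 sqr_sqrtr ?ler0n // exprVn.
rewrite (qsum_xorbs R (size_tuple y) (size_tuple z)) mulr_sumr -big_tuple_bitseqs.
apply: eq_bigr => x _; rewrite /hadamard_n !prod_hadamard_bits ?size_tuple // phase_pathq.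
by rewrite (dotbC x) !signr_addb -sqrt2_invX; ring.
Qed.

Lemma Rmat_sign n k (y z : n.-tuple bool) : n = (k + k)%N ->
  exists e : bool, Rmat R y z = (-1) ^+ e * (2 ^+ k)^-1.
Proof.
move=> n_kk; rewrite Rmat_qsum.
have [|e ->] := qsum_even R (a := xorbs y z) (k := k); first by rewrite size_xorbs !size_tuple.
have two_k_neq0 : 2 ^+ k != 0 :> R by rewrite expf_neq0 // pnatr_eq0.
by exists e; rewrite n_kk exprD; field.
Qed.

Lemma sum_Rmat_row n (y : n.-tuple bool) : \sum_z Rmat R y z = 1.
Proof.
under eq_bigr do rewrite Rmat_qsum.
rewrite -mulr_sumr (big_tuple_bitseqs _ n (fun z => qsum R (xorbs y z))).
by rewrite sum_qsum_xorbs ?size_tuple // mulVf // expf_neq0 // pnatr_eq0.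
Qed.

End HadamardConjugate.

Section SignCounts.

Variables (R : realDomainType) (T : finType) (f : T -> R).

Lemma cards_pos_neg : (forall t, f t != 0) ->
  (#|[set t | (0 < f t)%R]| + #|[set t | (f t < 0)%R]|)%N = #|T|.
Proof.
move=> f_neq0; rewrite -(cardsC [set t | 0 < f t]); congr (_ + _)%N.
by apply: eq_card => t; rewrite !inE -leNgt le_eqVlt (negbTE (f_neq0 t)).
Qed.

Lemma sum_const_norm (c : R) : (forall t, `|f t| = c) ->
  \sum_t f t = c * (#|[set t | 0 < f t]|%:R - #|[set t | f t < 0]|%:R).
Proof.
move=> f_norm; have card_sum (P : pred T) : #|[set t | P t]|%:R = \sum_t (P t)%:R :> R.
  by rewrite -sum1_card natr_sum big_mkcond; apply: eq_bigr => t _; rewrite inE; case: (P t).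
rewrite !card_sum -sumrB mulr_sumr; apply: eq_bigr => t _; rewrite -(f_norm t).
case: (ltgtP (f t) 0) => [f_neg|f_pos|->]; last by rewrite normr0 mul0r.
  by rewrite ltr0_norm // sub0r mulrN1 opprK.
by rewrite gtr0_norm // subr0 mulr1.
Qed.

End SignCounts.

Theorem mainTheorem2 (R : rcfType) (n : nat) (n_pos : (0 < n)%N) (n_even : ~~ odd n) :
  (forall y z : n.-tuple bool, `|Rmat R y z| = (2 ^+ (n %/ 2))^-1)
  /\ (forall y : n.-tuple bool,
        #|[set z : n.-tuple bool | 0 < Rmat R y z]| = ((2 ^ n + 2 ^ (n %/ 2)) %/ 2)%N
     /\ #|[set z : n.-tuple bool | Rmat R y z < 0]| = ((2 ^ n - 2 ^ (n %/ 2)) %/ 2)%N).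
Proof.
set k := (n %/ 2)%N.
have n_kk : n = (k + k)%N.
  by rewrite /k divn2 addnn -[in LHS](odd_double_half n) (negbTE n_even).
have two_k_pos : 0 < 2 ^+ k :> R by rewrite exprn_gt0.
have Rmat_norm (y z : n.-tuple bool) : `|Rmat R y z| = (2 ^+ k)^-1.
  have [e ->] := Rmat_sign R y z n_kk.
  by rewrite normrM normr_sign mul1r normfV gtr0_norm.
split=> // y.
have Rmat_neq0 z : Rmat R y z != 0 by rewrite -normr_eq0 Rmat_norm invr_eq0 gt_eqF.
set pos := #|[set z : n.-tuple bool | 0 < Rmat R y z]|.
set neg := #|[set z : n.-tuple bool | Rmat R y z < 0]|.
have pos_add_neg : (pos + neg = 2 ^ n)%N.
  by rewrite /pos /neg cards_pos_neg // card_tuple card_bool.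
have := sum_const_norm (Rmat_norm y); rewrite sum_Rmat_row -/pos -/neg.
move=> /(congr1 ( *%R (2 ^+ k))); rewrite mulr1 mulrA mulfV ?gt_eqF // mul1r.
move=> /eqP; rewrite eq_sym subr_eq -natrX -natrD eqr_nat => /eqP pos_neg.
split; lia.
Qed.
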